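(* Let $G$ be a finite group and let $\phi=a_1\chi_1+\cdots+a_q\chi_q$ be a real-valued virtual character of $G$, where $a_i\in\mathbb{R}$ and $\chi_i$ are irreducible complex characters of $G$ with $n_i=\chi_i(1)$. Then for every $g\in G$, $$\mathbb{E}(\xi_{g,\phi})=\sum_{i=1}^q\frac{a_i}{n_i^2}\chi_i(g),$$ and if $\phi$ is real-valued and non-negative, then for every $g\in G$, $$c(g)\le\frac{\mathbb{E}(\xi_{g,\phi})}{\phi(1)}=\frac{(a_1/n_1^2)\chi_1(g)+\cdots+(a_q/n_q^2)\chi_q(g)}{a_1n_1+\cdots+a_qn_q}.$$
   Context: $G$ is a finite group of order $m$; $G\times G$ carries the uniform probability measure and $\mathbb{E}$ is expectation with respect to it. $c(g)=|\{(x,y)\in G\times G:[x,y]=g\}|/|G|^2$. For $g\in G$, $\xi_{g,\phi}(a,b)=\mathrm{Re}\big(\phi([a,b]^{-1}g)\big)$ for $(a,b)\in G\times G$. A virtual character $\phi=\sum_{\chi\in\mathrm{Irr}(G)}a_\chi\chi$ is non-negative if (a) $\mathrm{Re}(\phi(h))\ge0$ for all $h\in G$, and (b) all $a_\chi$ are non-negative reals, not all zero. *)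

From HB Require Import structures.
From mathcomp Require Import all_boot all_order all_algebra all_fingroup all_solvable all_field all_character.
Set Implicit Arguments. Unset Strict Implicit. Unset Printing Implicit Defensive.
Import Order.TTheory GRing.Theory Num.Theory.
Local Open Scope ring_scope.

Definition vchar (gT : finGroupType) (G : {group gT}) (a : Iirr G -> algC)
  : 'CF(G) := \sum_i a i *: 'chi_i.

(* Expectation w.r.t. the uniform probability measure on G x G. *)
Definition Exp (gT : finGroupType) (G : {group gT}) (f : gT * gT -> algC) : algC :=
  (\sum_(p in setX G G) f p) / (#|G| ^ 2)%:R.

Definition xi (gT : finGroupType) (G : {group gT}) (phi : 'CF(G)) (g : gT)
  (p : gT * gT) : algC := 'Re (phi ([~ p.1, p.2]^-1 * g)%g).

Definition cfreq (gT : finGroupType) (G : {group gT}) (g : gT) : algC :=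
  #|[set p in setX G G | ([~ p.1, p.2] == g)%g]|%:R / (#|G| ^ 2)%:R.

Definition nonneg_vchar (gT : finGroupType) (G : {group gT}) (a : Iirr G -> algC) : Prop :=
  (forall h, h \in G -> 0 <= 'Re (vchar a h)) /\
  (forall i, 0 <= a i) /\ (exists i, a i != 0).

From HB Require Import structures.
From mathcomp Require Import all_boot all_order all_algebra all_fingroup all_solvable all_field all_character.
From mathcomp Require Import ring.
Import Order.TTheory GRing.Theory Num.Theory.
Local Open Scope ring_scope.

(* For an irreducible character chi of degree n, the function
   b |-> \sum_(y in G) chi (a ^ y * b) is a class function whose only
   irreducible constituent is chi, so it equals (|G| chi(a) / n) chi.
   Since [x, y]^-1 g = (x^-1)^y (x g), summing first over y and then over x
   (generalized orthogonality) gives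
   \sum_(x, y) chi ([x, y]^-1 g) = |G|^2 chi(g) / n^2, and the mean of
   xi_{g,phi} follows by linearity. The bound on c(g) holds termwise:
   xi_{g,phi}(x, y) = phi(1) when [x, y] = g, and is nonnegative otherwise. *)

Lemma sum_setX {T1 T2 : finType} (A1 : {set T1}) (A2 : {set T2})
    {R : nmodType} (F : T1 -> T2 -> R) :
  \sum_(p in setX A1 A2) F p.1 p.2 = \sum_(x in A1) \sum_(y in A2) F x y.
Proof.
rewrite (eq_bigl (fun p => (p.1 \in A1) && (p.2 \in A2))) => [|[x y]].
  by rewrite pair_big.
by rewrite in_setX.
Qed.

Section ConjugateAverage.
Context {gT : finGroupType} {G : {group gT}}.

Definition conj_mul_sum (phi : 'CF(G)) (a b : gT) : algC :=
  if b \in G then \sum_(y in G) phi (a ^ y * b)%g else 0.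

Lemma conj_mul_sum_class phi a :
  is_class_fun <<G>>%g [ffun b => conj_mul_sum phi a b].
Proof.
rewrite genGid; apply: intro_class_fun => [b z Gb Gz | b /negPf nGb].
  rewrite /conj_mul_sum groupJ // Gb (reindex_inj (mulIg z)) /=.
  apply: eq_big => [y | y Gy]; first by rewrite groupMr.
  by rewrite conjgM -conjMg cfunJ.
by rewrite /conj_mul_sum nGb.
Qed.

Definition cfConjMul phi a : 'CF(G) := Cfun 0 (conj_mul_sum_class phi a).

Lemma cfConjMulE phi a b : b \in G ->
  cfConjMul phi a b = \sum_(y in G) phi (a ^ y * b)%g.
Proof. by move=> Gb; rewrite cfunE /conj_mul_sum Gb. Qed.

Lemma cfunC (phi : 'CF(G)) x y : y \in G -> phi (x * y)%g = phi (y * x)%g.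
Proof. by move=> Gy; rewrite -(cfunJ _ _ (groupVr Gy)) conjgE invgK !mulgA mulgK. Qed.

Lemma sum_irr_mul_inv (i j : Iirr G) g :
  \sum_(x in G) 'chi_i (x * g)%g * 'chi_j x^-1%g =
    (i == j)%:R * (#|G|%:R * ('chi_i g / 'chi_i 1%g)).
Proof.
by rewrite -[LHS](mulVKf (neq0CG G)) generalized_orthogonality_relation mulrCA.
Qed.

Lemma cfdot_cfConjMul_irr (i j : Iirr G) a : a \in G ->
  '[cfConjMul 'chi_i a, 'chi_j] = (i == j)%:R * (#|G|%:R * ('chi_i a / 'chi_i 1%g)).
Proof.
move=> Ga; rewrite cfdotE.
under eq_bigr => b Gb do rewrite cfConjMulE // -irr_inv mulr_suml.
rewrite exchange_big /=.
under eq_bigr => y Gy.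
  under eq_bigr => b Gb do rewrite cfunC //.
  rewrite sum_irr_mul_inv cfunJ //.
  over.
by rewrite sumr_const -[X in _ * X]mulr_natl mulKf ?neq0CG.
Qed.

Lemma cfConjMul_irr (i : Iirr G) a : a \in G ->
  cfConjMul 'chi_i a = (#|G|%:R * ('chi_i a / 'chi_i 1%g)) *: 'chi_i.
Proof.
move=> Ga; rewrite [LHS]cfun_sum_cfdot (bigD1 i) //= big1 ?addr0 => [|j nji].
  by rewrite cfdot_cfConjMul_irr // eqxx mul1r.
by rewrite cfdot_cfConjMul_irr // eq_sym (negPf nji) mul0r scale0r.
Qed.

Lemma sum_irr_conj_mul (i : Iirr G) a b : a \in G -> b \in G ->
  \sum_(y in G) 'chi_i (a ^ y * b)%g = #|G|%:R * 'chi_i a * 'chi_i b / 'chi_i 1%g.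
Proof.
by move=> Ga Gb; rewrite -cfConjMulE // cfConjMul_irr // cfunE; ring.
Qed.

Lemma commgV_mul (x y g : gT) : ([~ x, y]^-1 * g = x^-1 ^ y * (x * g))%g.
Proof. by rewrite /commg /conjg !invMg !invgK !mulgA. Qed.

Lemma sum_irr_commgV_mul (i : Iirr G) g : g \in G ->
  \sum_(x in G) \sum_(y in G) 'chi_i ([~ x, y]^-1 * g)%g =
    #|G|%:R ^+ 2 * 'chi_i g / 'chi_i 1%g ^+ 2.
Proof.
move=> Gg; transitivity
    (#|G|%:R / 'chi_i 1%g * \sum_(x in G) 'chi_i (x * g)%g * 'chi_i x^-1%g).
  rewrite mulr_sumr; apply: eq_bigr => x Gx.
  under eq_bigr => y _ do rewrite commgV_mul.
  by rewrite sum_irr_conj_mul ?groupV ?groupM //; ring.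
by rewrite sum_irr_mul_inv eqxx mul1r; field; apply: irr1_neq0.
Qed.

End ConjugateAverage.

Section CommutatorStatistics.
Context {gT : finGroupType} {G : {group gT}}.

Lemma vcharE (a : Iirr G -> algC) h : vchar a h = \sum_i a i * 'chi_i h.
Proof. by rewrite sum_cfunE; apply: eq_bigr => i _; rewrite cfunE. Qed.

Lemma Exp_xi_real (phi : 'CF(G)) g :
    {in G, forall h, phi h \is Num.real} -> g \in G ->
  Exp G (xi phi g) =
    (\sum_(x in G) \sum_(y in G) phi ([~ x, y]^-1 * g)%g) / (#|G| ^ 2)%:R.
Proof.
move=> Rphi Gg; rewrite /Exp /xi.
rewrite (sum_setX _ _ (fun x y => 'Re (phi ([~ x, y]^-1 * g)%g))) /=.
congr (_ / _); apply: eq_bigr => x Gx; apply: eq_bigr => y Gy.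
by apply/Creal_ReP/Rphi; rewrite groupM ?groupV ?groupR.
Qed.

Lemma Exp_xi_vchar (a : Iirr G -> algC) g :
    {in G, forall h, vchar a h \is Num.real} -> g \in G ->
  Exp G (xi (vchar a) g) = \sum_i a i / 'chi_i 1%g ^+ 2 * 'chi_i g.
Proof.
move=> Rphi Gg; rewrite Exp_xi_real //.
under eq_bigr => x _ do under eq_bigr => y _ do rewrite vcharE.
under eq_bigr => x _ do rewrite exchange_big /=.
rewrite exchange_big /= mulr_suml; apply: eq_bigr => i _.
under eq_bigr => x _ do rewrite -mulr_sumr.
rewrite -mulr_sumr sum_irr_commgV_mul // natrX.
by field; rewrite irr1_neq0 neq0CG.
Qed.

Lemma cfreq_mul_le_Exp_xi (phi : 'CF(G)) g :
    {in G, forall h, 0 <= 'Re (phi h)} -> phi 1%g \is Num.real -> g \in G ->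
  cfreq G g * phi 1%g <= Exp G (xi phi g).
Proof.
move=> phi_ge0 Rphi1 Gg; rewrite /cfreq /Exp mulrAC ler_wpM2r ?invr_ge0 ?ler0n //.
rewrite mulr_natl -sumr_const (eq_bigl _ _ (fun p => in_set _ p)) big_mkcondr /=.
apply: ler_sum => -[x y] /setXP[Gx Gy] /=; rewrite /xi /=.
case: eqP => [<- | _]; first by rewrite mulVg (elimT (Creal_ReP _) Rphi1).
by rewrite phi_ge0 // groupM ?groupV ?groupR.
Qed.

Lemma nonneg_vchar1_gt0 (a : Iirr G -> algC) : nonneg_vchar a -> 0 < vchar a 1%g.
Proof.
case=> _ [a_ge0 [j nz_aj]]; rewrite vcharE (bigD1 j) //= ltr_pwDl //.
  by rewrite mulr_gt0 ?irr1_gt0 // lt_def nz_aj a_ge0.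
by rewrite sumr_ge0 // => i _; rewrite mulr_ge0 ?a_ge0 ?ltW ?irr1_gt0.
Qed.

End CommutatorStatistics.

Theorem corollary1 (gT : finGroupType) (G : {group gT}) (a : Iirr G -> algC) :
  (forall i, a i \is Num.real) ->
  (forall h, h \in G -> vchar a h \is Num.real) ->
  (forall g, g \in G ->
     Exp G (xi (vchar a) g) = \sum_i a i / ('chi_i 1%g) ^+ 2 * 'chi_i g) /\
  (nonneg_vchar a -> forall g, g \in G ->
     cfreq G g <= Exp G (xi (vchar a) g) / vchar a 1%g /\
     Exp G (xi (vchar a) g) / vchar a 1%g =
       (\sum_i a i / ('chi_i 1%g) ^+ 2 * 'chi_i g) / (\sum_i a i * 'chi_i 1%g)).
Proof.
move=> _ Rphi; split=> [g | a_nonneg g Gg]; first exact: Exp_xi_vchar.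
have phi1_gt0 := nonneg_vchar1_gt0 _ a_nonneg.
split; last by rewrite Exp_xi_vchar // vcharE.
rewrite ler_pdivlMr // cfreq_mul_le_Exp_xi ?gtr0_real //.
by case: a_nonneg.
Qed.
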